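(* In the setting of the context, let $i\in\{1,\dots,n\}$ and let $(x_1,y_1)$, $(x_2,y_2)$ be two distinct elements of $\mathfrak{X}_i$ with $0<y_1\le y_2$. Then $$\frac{y_2}{y_1}\ge \frac{1}{2Y_S+7/3}\max\big(1,|\beta_i(x_1,y_1)-m(x_1,y_1)|\big).$$
   Context: Setting: $n\ge3$; $F(x,y)=\sum_{i=0}^s a_ix^{n_i}y^{n-n_i}\in\mathbb{Z}[x,y]$ of degree $n$, irreducible over $\mathbb{Q}$, all $a_i\neq0$, $0=n_0<\dots<n_s=n$, discriminant $D$. $R=n^{800\log^2n}$; $h$ a positive integer and $\kappa>1$ an integer with $h\le |D|^{\frac{1}{2(n-1)(2+1/\kappa)}}/\big((3R)^{n/2}(ns)^{2s+n}\big)$; $Y_S=e^6s(ns)^{2s/n}h^{1/(\kappa n)}$. Write $F(x,y)=a\prod_{i=1}^n(x-\alpha_iy)$ ($\alpha_i$ the roots of $F(x,1)$) and $L_i(x,y)=x-\alpha_iy$. A ''solution'' is a pair $(x,y)\in\mathbb{Z}^2$ with $\gcd(x,y)=1$ and $1\le|F(x,y)|\le h$, with $(x,y)$ and $(-x,-y)$ identified. Assume there is a solution with $0\le y\le Y_S$, and fix one such, $(x_0,y_0)$, with $y_0\ge0$ minimal. Index the roots so that $|L_1(x_0,y_0)|=\min_i|L_i(x_0,y_0)|$. There is at most one solution $(x^*,y^* )$ with $0<y^*\le Y_S$ and $|L_1(x^*,y^* )|<1/(2Y_S)$; let $\mathbf{A}=\{(x_0,y_0)\}$ together with $(x^*,y^*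 )$ if it exists. For a primitive $(x,y)$ choose integers $x',y'$ with $x'y-xy'=1$ and set $\beta_j(x,y)=-L_j(x',y')/L_j(x,y)$ for $j=1,\dots,n$ (so that $F(ux+wx',uy+wy')=F(x,y)\prod_j(u-\beta_j(x,y)w)$), and let $m(x,y)$ be an integer with $|\mathrm{Re}\,\beta_1(x,y)-m(x,y)|\le 1/2$. For $1\le i\le n$, $\mathfrak{X}_i$ is the set of solutions $(x,y)\notin\mathbf{A}$ with $1\le y\le Y_S$ and $|L_i(x,y)|\le\frac{1}{2y}$. *)

From mathcomp Require Import all_boot all_order all_algebra.
From mathcomp Require Import complex.
From mathcomp Require Import all_classical all_reals all_analysis.
Set Implicit Arguments.
Unset Strict Implicit.
Unset Printing Implicit Defensive.
Import Order.TTheory GRing.Theory Num.Theory.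
Local Open Scope ring_scope.

(* The binary form F(x,y) = sum_k f_k x^k y^(n-k) of degree n, encoded by its
   coefficient polynomial f = F(x,1) in Z[x] (size f = n+1). *)
Definition Fval (f : {poly int}) (n : nat) (x y : int) : int :=
  \sum_(k < n.+1) f`_k * x ^+ k * y ^+ (n - k).

Definition nterms_s (f : {poly int}) : nat := (count (fun c : int => c != 0) f).-1.

Definition is_solution (f : {poly int}) (n h : nat) (x y : int) : Prop :=
  coprimez x y /\ (1 <= `|Fval f n x y|)%R /\ (`|Fval f n x y| <= h%:Z)%R.

Section Cplx.
Variable R : realType.

Definition cmod (z : R[i]) : R :=
  Num.sqrt (complex.Re z ^+ 2 + complex.Im z ^+ 2).

(* L_j(x,y) = x - alpha_j y, roots indexed 1..n *)
Definition Lin (alpha : nat -> R[i]) (j : nat) (x y : int) : R[i] :=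
  x%:~R - alpha j * y%:~R.

(* beta_j(x,y) = - L_j(x',y') / L_j(x,y), for given x', y' with x'y - xy' = 1 *)
Definition beta (alpha : nat -> R[i]) (j : nat) (x y x' y' : int) : R[i] :=
  - Lin alpha j x' y' / Lin alpha j x y.

Definition disc (a : int) (n : nat) (alpha : nat -> R[i]) : R[i] :=
  a%:~R ^+ (2 * n - 2) *
  \prod_(1 <= i < n.+1) \prod_(i.+1 <= j < n.+1) (alpha i - alpha j) ^+ 2.

Definition Rconst (n : nat) : R := (n%:R : R) `^ (800 * (ln (n%:R : R)) ^+ 2).

Definition YS (n s h kappa : nat) : R :=
  expR 6 * s%:R * (((n * s)%:R : R) `^ (2 * s%:R / n%:R))
    * ((h%:R : R) `^ (1 / (kappa%:R * n%:R))).

(* membership in the set A = {(x0,y0)} u {(x_star,y_star)}, with (x,y) ~ (-x,-y) *)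
Definition inA (f : {poly int}) (n h : nat) (alpha : nat -> R[i]) (Y : R)
    (x0 y0 x y : int) : Prop :=
  ((x, y) = (x0, y0)) \/ ((x, y) = (- x0, - y0)) \/
  (is_solution f n h x y /\ (0 < y)%R /\ (y%:~R <= Y)%R /\
   (cmod (Lin alpha 1 x y) < 1 / (2 * Y))%R).

Definition inX (f : {poly int}) (n h : nat) (alpha : nat -> R[i]) (Y : R)
    (x0 y0 : int) (i : nat) (x y : int) : Prop :=
  is_solution f n h x y /\ ~ inA f n h alpha Y x0 y0 x y /\
  (1 <= y)%R /\ (y%:~R <= Y)%R /\
  (cmod (Lin alpha i x y) <= 1 / (2 * y%:~R))%R.

End Cplx.

From mathcomp Require Import all_boot all_order all_algebra.
From mathcomp Require Import complex.
From mathcomp Require Import all_classical all_reals all_analysis.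
From mathcomp Require Import ring lra.
Import Order.TTheory GRing.Theory Num.Theory.
Local Open Scope ring_scope.

(* Write L_j = L_j(x1,y1).  From x'y1 - x1y' = 1 one gets
   beta_j(x1,y1) = -1/(y1 L_j) - y'/y1, so the real shift y'/y1 + m is within
   1/2 + 1/(y1|L_1|) of 0 by the choice of m, and
   |beta_i - m| <= 1/(y1|L_i|) + 1/2 + 1/(y1|L_1|).
   Since (x1,y1) is not in A, |L_1| >= 1/(2Y_S).  If y1 < y2, coprimality of
   (x2,y2) makes x2y1 - x1y2 a nonzero integer, and
   1 <= |L_i(x2,y2)| y1 + |L_i| y2 with |L_i(x2,y2)| <= 1/(2y2) forces
   |L_i| >= 1/(2y2); as y2 >= y1 + 1 the bounds add up to the claim.
   If y1 = y2, two distinct x with |x - alpha_i y1| <= 1/(2y1) force y1 = 1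
   and alpha_i = (x1 + x2)/2, a rational root of the irreducible F(x,1) of
   degree n >= 3. *)

Section ComplexModulus.
Context {R : realType}.
Local Open Scope complex_scope.
Implicit Types (z w : R[i]) (r : R).

Lemma cmodE z : `|z| = (cmod z)%:C.
Proof. by rewrite normc_def. Qed.

Lemma cmod_ge0 z : 0 <= cmod z.
Proof. exact: sqrtr_ge0. Qed.

Lemma ler_cmodB z w : cmod (z - w) <= cmod z + cmod w.
Proof. by rewrite -lecR rmorphD /= -!cmodE ler_normB. Qed.

Lemma cmodM z w : cmod (z * w) = cmod z * cmod w.
Proof. by apply: complexI; rewrite rmorphM /= -!cmodE normrM. Qed.

Lemma cmodV z : cmod z^-1 = (cmod z)^-1.
Proof. by apply: complexI; rewrite fmorphV /= -!cmodE normfV. Qed.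

Lemma cmodN z : cmod (- z) = cmod z.
Proof. by apply: complexI; rewrite -!cmodE normrN. Qed.

Lemma cmod_real r : cmod r%:C = `|r|.
Proof. by rewrite /cmod /= expr0n /= addr0 sqrtr_sqr. Qed.

Lemma cmod_int (k : int) : cmod (k%:~R : R[i]) = (`|k|%:~R : R).
Proof.
have -> : (k%:~R : R[i]) = (k%:~R : R)%:C by rewrite rmorph_int.
by rewrite cmod_real intr_norm.
Qed.

Lemma cmod_gt0 z : (0 < cmod z) = (z != 0).
Proof. by rewrite -normr_gt0 cmodE ltcR. Qed.

Lemma ler_Re_cmod z : `|complex.Re z| <= cmod z.
Proof. by rewrite -sqrtr_sqr ler_wsqrtr // lerDl sqr_ge0. Qed.

Lemma cmod_sqr z : cmod z ^+ 2 = complex.Re z ^+ 2 + complex.Im z ^+ 2.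
Proof. by rewrite sqr_sqrtr // addr_ge0 // sqr_ge0. Qed.

(* Expanding both squared moduli, the identity
   [(a - u)^2 + (b - u)^2 = ((a - b)^2 + (a + b - 2u)^2) / 2] leaves no room. *)
Lemma cmod_le_half_midpoint (a b : R) z :
  1 <= `|a - b| -> cmod (a%:C - z) <= 1 / 2 -> cmod (b%:C - z) <= 1 / 2 ->
  z = ((a + b) / 2)%:C.
Proof.
case: z => u v ab_ge1 za zb.
have sq_le (c : R) : 0 <= c -> c <= 1 / 2 -> c ^+ 2 <= 1 / 4 by nra.
have := sq_le _ (cmod_ge0 _) za; have := sq_le _ (cmod_ge0 _) zb.
rewrite !cmod_sqr /= !sub0r !sqrrN => zb2 za2.
have ab2 : 1 <= (a - b) ^+ 2 by rewrite -real_normK ?num_real //; nra.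
have v2 := sqr_ge0 v; have uab2 := sqr_ge0 (a + b - 2 * u).
have /eqP v0 : v == 0 by rewrite -sqrf_eq0 eq_le sqr_ge0 andbT; nra.
have /eqP uab0 : a + b - 2 * u == 0 by rewrite -sqrf_eq0 eq_le sqr_ge0 andbT; nra.
by rewrite v0; congr (_ +i* _); lra.
Qed.

Lemma cmod_shift_le z w (t c : R) :
  `|complex.Re (- w - t%:C) - c| <= 1 / 2 ->
  cmod (- z - t%:C - c%:C) <= cmod z + (1 / 2 + cmod w).
Proof.
have -> : - z - t%:C - c%:C = - z - (t + c)%:C by rewrite rmorphD opprD addrA.
move=> near_c.
apply: le_trans (ler_cmodB _ _) _; rewrite cmodN cmod_real lerD2l.
have := ler_Re_cmod w; move: near_c; case: w => u v /=.
rewrite !ler_norml => /andP[? ?] /andP[? ?]; apply/andP; split; lra.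
Qed.

End ComplexModulus.

Section RationalRoots.
Local Set Implicit Arguments.
Local Unset Strict Implicit.

Lemma irreducible_no_root (F : fieldType) (p : {poly F}) (x : F) :
  irreducible_poly p -> (2 < size p)%N -> ~~ root p x.
Proof.
move=> [_ irr_p] size_p; rewrite -dvdp_XsubCl; apply/negP => /irr_p.
rewrite size_XsubC => /(_ isT) /eqp_size; rewrite size_XsubC => size2.
by rewrite -size2 in size_p.
Qed.

Lemma factored_root_not_rat (L : numFieldType) (f : {poly int}) n
    (alpha : nat -> L) j :
  (2 <= n)%N -> size f = n.+1 ->
  irreducible_poly (map_poly (intr : int -> rat) f) ->
  map_poly (intr : int -> L) f = (f`_n)%:~R *: \prod_(1 <= k < n.+1) ('X - (alpha k)%:P) ->
  (1 <= j <= n)%N -> forall q : rat, alpha j != ratr q.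
Proof.
move=> n_ge2 size_f irr_f f_factor j_range q; set p := map_poly intr f in irr_f.
have f_ratr : map_poly (intr : int -> L) f = map_poly ratr p.
  by rewrite /p -map_poly_comp; apply: eq_map_poly => c /=; rewrite ratr_int.
have root_alpha : root (map_poly ratr p) (alpha j).
  have lead_neq0 : f`_n != 0.
    by rewrite -[n]/(n.+1.-1) -size_f -lead_coefE lead_coef_eq0 -size_poly_gt0 size_f.
  rewrite -f_ratr f_factor rootZ ?intr_eq0 // /root horner_prod prodf_seq_eq0.
  apply/hasP; exists j; last by rewrite hornerXsubC subrr eqxx.
  by rewrite mem_index_iota ltnS.
apply/eqP => alpha_q; move: root_alpha; rewrite alpha_q fmorph_root; apply/negP.
by apply: irreducible_no_root; rewrite // size_map_inj_poly ?size_f //; exact: intr_inj.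
Qed.

End RationalRoots.

Section Approximations.
Local Set Implicit Arguments.
Local Unset Strict Implicit.
Context {R : realType} {alpha : nat -> R[i]}.
Local Open Scope complex_scope.

Lemma coprimez_cross_neq (x1 y1 x2 y2 : int) :
  coprimez x2 y2 -> 0 < y1 -> y1 < y2 -> x2 * y1 != x1 * y2.
Proof.
rewrite coprimez_sym => cop y1_gt0 y12; apply/eqP => cross_eq.
have : (y2 %| y1)%Z by rewrite -(Gauss_dvdzr y1 cop) cross_eq dvdz_mull.
move/dvdn_leq; rewrite absz_gt0 gt_eqF // => /(_ isT).
rewrite -lez_nat !abszE (gtr0_norm y1_gt0) (gtr0_norm (lt_trans y1_gt0 y12)).
by rewrite leNgt y12.
Qed.

Lemma Lin_cross j x1 y1 x2 y2 :
  ((x2 * y1 - x1 * y2)%:~R : R[i]) =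
    Lin alpha j x2 y2 * y1%:~R - Lin alpha j x1 y1 * y2%:~R.
Proof. by rewrite /Lin intrB !intrM; ring. Qed.

Lemma Lin_lower_bound j x1 y1 x2 y2 :
  0 < y1 -> y1 <= y2 -> x2 * y1 != x1 * y2 ->
  cmod (Lin alpha j x2 y2) <= 1 / (2 * y2%:~R) ->
  1 / (2 * y2%:~R) <= cmod (Lin alpha j x1 y1).
Proof.
move=> y1_gt0 y12 cross_neq0 close2.
have y2_gt0 : 0 < y2 := lt_le_trans y1_gt0 y12.
have cross_ge1 : 1 <= cmod (Lin alpha j x2 y2) * y1%:~R + cmod (Lin alpha j x1 y1) * y2%:~R.
  have : (1 : R) <= `|x2 * y1 - x1 * y2|%:~R.
    by rewrite ler1z -gtz0_ge1 normr_gt0 subr_eq0.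
  move/le_trans; apply; rewrite -cmod_int (Lin_cross j).
  apply: (le_trans (ler_cmodB _ _)).
  by rewrite !cmodM !cmod_int !gtr0_norm.
have Y12 : (y1%:~R : R) <= y2%:~R by rewrite ler_int.
have Y1_gt0 : (0 : R) < y1%:~R by rewrite ltr0z.
move: close2; rewrite !ler_pdivlMr ?ler_pdivrMr ?mulr_gt0 ?ltr0z //.
have := cmod_ge0 (Lin alpha j x2 y2); nra.
Qed.

Lemma Lin_same_denominator j x1 x2 y :
  x1 != x2 -> 1 <= y ->
  cmod (Lin alpha j x1 y) <= 1 / (2 * y%:~R) ->
  cmod (Lin alpha j x2 y) <= 1 / (2 * y%:~R) ->
  alpha j = ratr ((x1 + x2)%:~R / 2).
Proof.
move=> x12 y_ge1 close1 close2.
have dist_ge1 : (1 : R) <= `|x1 - x2|%:~R.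
  by rewrite ler1z -gtz0_ge1 normr_gt0 subr_eq0.
have y_eq1 : y = 1.
  have Y_gt0 : (0 : R) < y%:~R by rewrite ltr0z (lt_le_trans ltr01 y_ge1).
  have dist_le : 1 <= cmod (Lin alpha j x1 y) + cmod (Lin alpha j x2 y).
    apply: le_trans dist_ge1 _; rewrite -cmod_int.
    have -> : ((x1 - x2)%:~R : R[i]) = Lin alpha j x1 y - Lin alpha j x2 y.
      by rewrite /Lin intrB; ring.
    exact: ler_cmodB.
  move: close1 close2; rewrite !ler_pdivlMr ?mulr_gt0 // => close1 close2.
  apply/eqP; rewrite eq_le y_ge1 andbT -(lerz1 R); nra.
move: close1 close2; rewrite y_eq1 /Lin /= !mulr1.
have real_int (k : int) : (k%:~R : R[i]) = (k%:~R : R)%:C by rewrite rmorph_int.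
have -> : ratr ((x1 + x2)%:~R / 2) = ((x1%:~R + x2%:~R) / 2 : R)%:C.
  rewrite -[LHS](fmorph_rat (real_complex R)); congr (_%:C).
  by rewrite fmorph_div rmorph_int intrD rmorph_nat.
rewrite !real_int; apply: cmod_le_half_midpoint.
by rewrite -intrB -intr_norm.
Qed.

Lemma beta_Lin j x y x' y' :
  x' * y - x * y' = 1 -> y != 0 -> Lin alpha j x y != 0 ->
  beta alpha j x y x' y' = - (y%:~R * Lin alpha j x y)^-1 - (y'%:~R / y%:~R)%:C.
Proof.
move=> det1 y_neq0 L_neq0.
have Y_neq0 : (y%:~R : R[i]) != 0 by rewrite intr_eq0.
have x'E : (x'%:~R : R[i]) = (1 + x%:~R * y'%:~R) / y%:~R.
  have : ((x' * y - x * y')%:~R : R[i]) = 1 by rewrite det1.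
  by rewrite intrB !intrM => /eqP; rewrite subr_eq addrC => /eqP <-; rewrite mulfK.
have -> : ((y'%:~R / y%:~R)%:C : R[i]) = y'%:~R / y%:~R.
  by rewrite fmorph_div /= !rmorph_int.
move: L_neq0; rewrite /beta /Lin x'E => L_neq0.
by field; rewrite Y_neq0 L_neq0.
Qed.

Lemma beta_sub_bound j k x y x' y' (m : int) :
  x' * y - x * y' = 1 -> 0 < y -> Lin alpha j x y != 0 -> Lin alpha k x y != 0 ->
  `|complex.Re (beta alpha k x y x' y') - m%:~R| <= 1 / 2 ->
  cmod (beta alpha j x y x' y' - m%:~R) <=
    (y%:~R * cmod (Lin alpha j x y))^-1 + (1 / 2 + (y%:~R * cmod (Lin alpha k x y))^-1).
Proof.
move=> det1 y_gt0 Lj_neq0 Lk_neq0.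
have -> : (m%:~R : R[i]) = (m%:~R : R)%:C by rewrite rmorph_int.
have y_neq0 : y != 0 by rewrite gt_eqF.
rewrite !beta_Lin //.
move/(cmod_shift_le ((y%:~R * Lin alpha j x y)^-1)).
by rewrite !cmodV !cmodM cmod_int (gtr0_norm y_gt0).
Qed.

End Approximations.

Lemma ratio_bound {R : realFieldType} {Y Y1 Y2 a b M : R} :
  1 <= Y -> 1 <= Y1 -> Y1 + 1 <= Y2 ->
  1 / (2 * Y2) <= a -> 1 / (2 * Y) <= b ->
  M <= (Y1 * a)^-1 + (1 / 2 + (Y1 * b)^-1) ->
  Num.max 1 M / (2 * Y + 7 / 3) <= Y2 / Y1.
Proof.
move=> Y_ge1 Y1_ge1 Y12 a_ge b_ge M_le.
have Y1_gt0 : 0 < Y1 by lra.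
have inv_le c Z : 0 < Z -> 1 / (2 * Z) <= c -> (Y1 * c)^-1 <= 2 * Z / Y1.
  move=> Z_gt0 c_ge; have c_gt0 : 0 < c by apply: lt_le_trans c_ge; rewrite divr_gt0 ?mulr_gt0.
  rewrite invfM mulrC ler_pM2r ?invr_gt0 // -div1r ler_pdivrMr // mulrC.
  by rewrite -ler_pdivrMr ?mulr_gt0.
have a_le : (Y1 * a)^-1 <= 2 * (Y2 / Y1) by rewrite mulrA; apply: inv_le a_ge; lra.
have b_le : (Y1 * b)^-1 <= 2 * (Y / Y1) by rewrite mulrA; apply: inv_le b_ge; lra.
set v := Y1^-1 in a_le b_le *; set r := Y2 * v in a_le *.
have v_gt0 : 0 < v by rewrite invr_gt0.
have r_ge : 1 + v <= r.
  have Y1v : Y1 * v = 1 by rewrite mulfV ?lt0r_neq0.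
  have : 0 <= (Y2 - Y1 - 1) * v by apply: mulr_ge0; lra.
  rewrite /r; nra.
have : 0 <= (Y - 1) * (r - 1 - v) by apply: mulr_ge0; lra.
rewrite ler_pdivrMr; last by lra.
by rewrite ge_max => ?; apply/andP; split; nra.
Qed.

Theorem lemma4p3 (R : realType) (n : nat) (f : {poly int}) (alpha : nat -> R[i])
    (h kappa : nat) (x0 y0 : int) (i : nat) (x1 y1 x2 y2 : int) :
  (3 <= n)%N ->
  size f = n.+1 ->
  f`_0 != 0 ->
  irreducible_poly (map_poly (intr : int -> rat) f) ->
  map_poly (fun c : int => (c%:~R : R[i])) f
    = (f`_n)%:~R *: \prod_(1 <= j < n.+1) ('X - (alpha j)%:P) ->
  (0 < h)%N -> (1 < kappa)%N ->
  let s := nterms_s f in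
  let D := disc (f`_n) n alpha in
  let Y := YS R n s h kappa in
  (h%:R : R) <= cmod D `^ (1 / (2 * (n%:R - 1) * (2 + 1 / kappa%:R)))
                / ((3 * Rconst R n) `^ (n%:R / 2) * ((n * s)%:R) ^+ (2 * s + n)) ->
  is_solution f n h x0 y0 -> 0 <= y0 -> y0%:~R <= Y ->
  (forall x y : int, is_solution f n h x y -> 0 <= y -> y0 <= y) ->
  (forall j : nat, (1 <= j <= n)%N ->
     cmod (Lin alpha 1 x0 y0) <= cmod (Lin alpha j x0 y0)) ->
  (1 <= i <= n)%N ->
  inX f n h alpha Y x0 y0 i x1 y1 ->
  inX f n h alpha Y x0 y0 i x2 y2 ->
  (x1, y1) <> (x2, y2) -> 0 < y1 -> y1 <= y2 ->
  forall x' y' m : int,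
    x' * y1 - x1 * y' = 1 ->
    `|complex.Re (beta alpha 1 x1 y1 x' y') - m%:~R| <= 1 / 2 ->
    Num.max 1 (cmod (beta alpha i x1 y1 x' y' - m%:~R)) / (2 * Y + 7 / 3)
      <= y2%:~R / y1%:~R.
Proof.
move=> n_ge3 size_f _ irr_f f_factor _ _ s D Y _ _ _ _ _ _ i_range X1 X2 neq12
  y1_gt0 y12 x' y' m det1 near_m.
case: X1 => sol1 [notA1 [y1_ge1 [y1_le close1]]].
case: X2 => [[cop2 _] [_ [_ [_ close2]]]].
have Y_ge1 : 1 <= Y by apply: le_trans y1_le; rewrite ler1z.
have K_ge : 1 / (2 * Y) <= cmod (Lin alpha 1 x1 y1).
  rewrite leNgt; apply/negP => K_lt; apply: notA1; right; right.
  exact: (conj sol1 (conj y1_gt0 (conj y1_le K_lt))).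
case: (ltgtP y1 y2) y12 => [y1_lt|//|y1_eq] _; last first.
  subst y2; have x12 : x1 != x2 by apply/eqP => x12; apply: neq12; rewrite x12.
  have := factored_root_not_rat (ltnW n_ge3) size_f irr_f f_factor i_range.
  move/(_ ((x1 + x2)%:~R / 2)).
  by rewrite (Lin_same_denominator x12 y1_ge1 close1 close2) eqxx.
have L_ge := Lin_lower_bound y1_gt0 (ltW y1_lt)
  (coprimez_cross_neq x1 cop2 y1_gt0 y1_lt) close2.
have Lin_neq0 j (Z : R) :
    0 < Z -> 1 / (2 * Z) <= cmod (Lin alpha j x1 y1) -> Lin alpha j x1 y1 != 0.
  by move=> Z_gt0 /(lt_le_trans _); rewrite -cmod_gt0; apply; rewrite divr_gt0 ?mulr_gt0.
apply: (ratio_bound Y_ge1 _ _ L_ge K_ge); first by rewrite ler1z.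
  have : ((y1 + 1)%:~R : R) <= y2%:~R by rewrite ler_int lezD1.
  by rewrite intrD.
apply: (beta_sub_bound det1 y1_gt0 _ _ near_m).
  by apply: Lin_neq0 L_ge; rewrite ltr0z (lt_trans y1_gt0).
by apply: Lin_neq0 K_ge; apply: lt_le_trans Y_ge1.
Qed.
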